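(* For all $p,q\in\mathcal{P}$, the germs $pq$ and $p/q$ both belong to $\mathcal{P}$.
   Context: All functions are real-valued functions defined on some interval $(a,\infty)$. Two such functions are identified if they agree for all sufficiently large $x$; these equivalence classes are germs at $+\infty$. Write $\ln^{(k)}$ for the $k$-fold iterated natural logarithm, with $\ln^{(0)}(x)=x$. Let $\mathcal{H}$ be the smallest set of germs at $+\infty$ satisfying: (i) $\ln^{(k)}\in\mathcal{H}$ for every integer $k\ge0$; (ii) if $f\in\mathcal{H}$, then $\exp\circ f\in\mathcal{H}$, and if moreover $f$ is eventually positive, then $f^\alpha\in\mathcal{H}$ for every real $\alpha>0$; (iii) if $f,g\in\mathcal{H}$ and $f\ne g$ (as germs), then $fg\in\mathcal{H}$; (iv) if $f,g\in\mathcal{H}$ and $f(x)/g(x)\to+\infty$, then $f/g\in\mathcal{H}$. Let $\mathcal{P}=\mathcal{H}\cup\{1\}\cup\{1/f:f\in\mathcal{H}\}$, where $1$ is the constant germ. *)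

From Stdlib Require Import Reals.
Open Scope R_scope.

(* Germs at +infinity are represented by total functions R -> R; a function
   defined only on (a, +oo) is represented by any total extension (only
   values for large x matter). *)

Definition eventually (P : R -> Prop) : Prop :=
  exists a : R, forall x : R, a < x -> P x.

Definition germ_eq (f g : R -> R) : Prop :=
  eventually (fun x => f x = g x).

Definition tends_to_pinfty (f : R -> R) : Prop :=
  forall M : R, eventually (fun x => M < f x).

Fixpoint iter_ln (k : nat) (x : R) : R :=
  match k with
  | O => x
  | S k' => ln (iter_ln k' x)
  end.

(* The class H: smallest set of germs closed under (i)-(iv).
   Since H is a set of germs, membership is invariant under germ equality
   (constructor H_germ). *)
Inductive inH : (R -> R) -> Prop :=
  | H_ln : forall k : nat, inH (iter_ln k)
  | H_exp : forall f, inH f -> inH (fun x => exp (f x))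
  | H_pow : forall f (alpha : R), inH f -> eventually (fun x => 0 < f x) ->
      0 < alpha -> inH (fun x => Rpower (f x) alpha)
  | H_mul : forall f g, inH f -> inH g -> ~ germ_eq f g ->
      inH (fun x => f x * g x)
  | H_div : forall f g, inH f -> inH g ->
      tends_to_pinfty (fun x => f x / g x) -> inH (fun x => f x / g x)
  | H_germ : forall f g, inH f -> germ_eq f g -> inH g.

Definition inP (p : R -> R) : Prop :=
  inH p \/ germ_eq p (fun _ => 1)
  \/ exists f, inH f /\ germ_eq p (fun x => 1 / f x).

(* The heart of the matter is that any two germs f, g of H are comparable:
   either f = g as germs, or f/g -> +oo, or g/f -> +oo.  Given this, a
   product of elements of P is either a product of two elements of H
   (in H by rule (iii), or by rule (ii) with exponent 2 when the factors
   coincide), or a ratio f/g of elements of H, which by comparability is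
   1, an element of H (rule (iv)) or the inverse of one.

   Comparability is proved by induction on the number of nested
   exponentials.  Stratify H into levels H_n (at most n nested exp's).
   The logarithm of an element of H_n is a real linear combination of
   "atoms" of level n: iterated logarithms, and for n > 0 elements of
   H_(n-1).  Atoms tend to +oo and, by induction, are pairwise comparable;
   for such a family every finite linear combination has a dominant term,
   hence is eventually 0, tends to +oo or tends to -oo.  Applied to
   ln f - ln g = ln (f/g), this is exactly the comparability of f and g. *)
From Pilot Require Import Defs.
From Stdlib Require Import Reals Lra Lia List Classical.
From Coquelicot Require Import Coquelicot.
Open Scope R_scope.

(* Coquelicot also defines a filter named [eventually]; we mean Defs'. *)
Notation ev := Defs.eventually.

Lemma ev_and (P Q : R -> Prop) : ev P -> ev Q -> ev (fun x => P x /\ Q x).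
Proof.
  intros [a Ha] [b Hb]. exists (Rmax a b). intros x Hx.
  pose proof (Rmax_l a b); pose proof (Rmax_r a b).
  split; [apply Ha | apply Hb]; lra.
Qed.

Lemma ev_mono (P Q : R -> Prop) : ev P -> (forall x, P x -> Q x) -> ev Q.
Proof. intros [a Ha] H. exists a. auto. Qed.

Lemma germ_ext (f g : R -> R) : (forall x, f x = g x) -> germ_eq f g.
Proof. intros H. exists 0. auto. Qed.

Lemma germ_refl (f : R -> R) : germ_eq f f.
Proof. apply germ_ext. reflexivity. Qed.

Lemma germ_sym (f g : R -> R) : germ_eq f g -> germ_eq g f.
Proof. intros H. apply (ev_mono _ _ H). auto. Qed.

Lemma germ_trans (f g h : R -> R) : germ_eq f g -> germ_eq g h -> germ_eq f h.
Proof. intros H1 H2. apply (ev_mono _ _ (ev_and _ _ H1 H2)). intros x [-> ->]. auto. Qed.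

Lemma tends_is_lim (f : R -> R) : tends_to_pinfty f <-> is_lim f p_infty p_infty.
Proof.
  split.
  - intros H P [M HM]. destruct (H M) as [a Ha]. exists a. intros x Hx. apply HM, Ha, Hx.
  - intros H M. apply (H (fun y => M < y)). exists M. auto.
Qed.

Lemma tends_germ (f g : R -> R) : tends_to_pinfty f -> germ_eq f g -> tends_to_pinfty g.
Proof.
  intros H Hg M. apply (ev_mono _ _ (ev_and _ _ (H M) Hg)).
  intros x [Hlt Heq]. congruence.
Qed.

Lemma tends_pos (f : R -> R) : tends_to_pinfty f -> ev (fun x => 0 < f x).
Proof. intros H. exact (H 0). Qed.

Lemma tends_comp (f g : R -> R) :
  tends_to_pinfty f -> tends_to_pinfty g -> tends_to_pinfty (fun x => f (g x)).
Proof.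
  intros Hf Hg M. destruct (Hf M) as [a Ha]. destruct (Hg a) as [b Hb].
  exists b. intros. apply Ha, Hb. auto.
Qed.

Lemma tends_id : tends_to_pinfty (fun x => x).
Proof. intros M. exists M. auto. Qed.

Lemma tends_exp : tends_to_pinfty exp.
Proof. apply tends_is_lim, is_lim_exp_p. Qed.

Lemma tends_ln : tends_to_pinfty ln.
Proof. apply tends_is_lim, is_lim_ln_p. Qed.

Lemma tends_mul (f g : R -> R) :
  tends_to_pinfty f -> tends_to_pinfty g -> tends_to_pinfty (fun x => f x * g x).
Proof.
  intros Hf Hg M. apply (ev_mono _ _ (ev_and _ _ (Hf (Rabs M + 1)) (Hg 1))).
  intros x [Hfx Hgx]. pose proof (Rle_abs M). pose proof (Rabs_pos M). nra.
Qed.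

Lemma tends_scal (a : R) (f : R -> R) :
  0 < a -> tends_to_pinfty f -> tends_to_pinfty (fun x => a * f x).
Proof.
  intros Ha Hf M. apply (ev_mono _ _ (Hf (M / a))). intros x Hx.
  apply Rmult_lt_compat_l with (r := a) in Hx; [|exact Ha].
  replace (a * (M / a)) with M in Hx by (field; lra). exact Hx.
Qed.

Lemma tends_rpow (f : R -> R) (al : R) :
  0 < al -> tends_to_pinfty f -> tends_to_pinfty (fun x => Rpower (f x) al).
Proof.
  intros Hal Hf. unfold Rpower.
  apply (tends_comp exp (fun x => al * ln (f x))); [apply tends_exp|].
  apply (tends_scal al (fun x => ln (f x))); [exact Hal|].
  apply (tends_comp ln f); [apply tends_ln | exact Hf].
Qed.

Lemma tends_iter_ln (k : nat) : tends_to_pinfty (iter_ln k).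
Proof.
  induction k as [|k IH]; [apply tends_id|].
  apply (tends_comp ln (iter_ln k)); [apply tends_ln | exact IH].
Qed.

Lemma is_lim_div_tends (f g : R -> R) (d : R) :
  is_lim f p_infty d -> tends_to_pinfty g -> is_lim (fun x => f x / g x) p_infty 0.
Proof.
  intros Hf Hg. apply tends_is_lim in Hg. apply is_lim_inv in Hg; [|discriminate].
  replace (Finite 0) with (Rbar_mult d 0) by (simpl; f_equal; ring).
  exact (is_lim_mult f (fun x => / g x) p_infty d 0 Hf Hg I).
Qed.
(** * Comparable germs *)

Definition comparable (f g : R -> R) : Prop :=
  germ_eq f g \/ tends_to_pinfty (fun x => f x / g x)
  \/ tends_to_pinfty (fun x => g x / f x).

Lemma tends_id_div_ln : tends_to_pinfty (fun y => y / ln y).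
Proof.
  apply tends_germ with (fun y => exp (ln y) / ln y).
  - apply (tends_comp (fun y => exp y / y) ln); [|apply tends_ln].
    apply tends_is_lim, is_lim_div_exp_p.
  - exists 0. intros x Hx. rewrite exp_ln; auto.
Qed.

Lemma tends_iter_ln_ratio (j d : nat) :
  tends_to_pinfty (fun x => iter_ln j x / iter_ln (S j + d) x).
Proof.
  induction d as [|d IH].
  - rewrite Nat.add_0_r.
    apply (tends_comp (fun y => y / ln y) (iter_ln j)).
    + apply tends_id_div_ln.
    + apply tends_iter_ln.
  - set (m := (S j + d)%nat) in *.
    replace (S j + S d)%nat with (S m) by (unfold m; lia).
    apply tends_germ with
      (fun x => (iter_ln j x / iter_ln m x) * (iter_ln m x / ln (iter_ln m x))).
    + apply tends_mul; [exact IH|].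
      apply (tends_comp (fun y => y / ln y)); [apply tends_id_div_ln | apply tends_iter_ln].
    + apply (ev_mono _ _ (ev_and _ _ (tends_pos _ (tends_iter_ln m))
                                     (tends_pos _ (tends_iter_ln (S m))))).
      intros x [Hm HSm]. change (iter_ln (S m) x) with (ln (iter_ln m x)) in HSm |- *.
      field. split; lra.
Qed.

Lemma comparable_iter_ln (j k : nat) : comparable (iter_ln j) (iter_ln k).
Proof.
  destruct (Compare_dec.lt_eq_lt_dec j k) as [[Hjk | ->] | Hkj].
  - right; left. replace k with (S j + (k - S j))%nat by lia. apply tends_iter_ln_ratio.
  - left. apply germ_refl.
  - right; right. replace j with (S k + (j - S k))%nat by lia. apply tends_iter_ln_ratio.
Qed.

Definition trichotomous (s : R -> R) : Prop :=
  germ_eq s (fun _ => 0) \/ tends_to_pinfty s \/ tends_to_pinfty (fun x => - s x).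

Lemma trichotomous_germ (s t : R -> R) : trichotomous s -> germ_eq s t -> trichotomous t.
Proof.
  intros [H | [H | H]] G.
  - left. exact (germ_trans _ _ _ (germ_sym _ _ G) H).
  - right; left. exact (tends_germ _ _ H G).
  - right; right. apply (tends_germ _ _ H).
    apply (ev_mono _ _ G). intros x ->. reflexivity.
Qed.

(* Positive germs whose logarithms differ by a trichotomous germ are
   comparable: f/g = exp (ln f - ln g). *)
Lemma comparable_of_log_gap (f g : R -> R) :
  ev (fun x => 0 < f x /\ 0 < g x) ->
  trichotomous (fun x => ln (f x) - ln (g x)) -> comparable f g.
Proof.
  intros Hpos [H | [H | H]].
  - left. apply (ev_mono _ _ (ev_and _ _ Hpos H)). intros x [[Hf Hg] Hx].
    rewrite <- (exp_ln (f x)), <- (exp_ln (g x)) by assumption. f_equal. lra.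
  - right; left.
    apply tends_germ with (fun x => exp (ln (f x) - ln (g x))).
    + apply (tends_comp exp); [apply tends_exp | exact H].
    + apply (ev_mono _ _ Hpos). intros x [Hf Hg].
      rewrite <- ln_div, exp_ln; auto. apply Rdiv_lt_0_compat; auto.
  - right; right.
    apply tends_germ with (fun x => exp (- (ln (f x) - ln (g x)))).
    + apply (tends_comp exp (fun x => - (ln (f x) - ln (g x)))); [apply tends_exp | exact H].
    + apply (ev_mono _ _ Hpos). intros x [Hf Hg].
      replace (- (ln (f x) - ln (g x))) with (ln (g x) - ln (f x)) by ring.
      rewrite <- ln_div, exp_ln; auto. apply Rdiv_lt_0_compat; auto.
Qed.
(** * Linear combinations of comparable germs *)

Definition term : Type := (R * (R -> R))%type.

Fixpoint lincomb (l : list term) (x : R) : R :=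
  match l with
  | nil => 0
  | t :: r => fst t * snd t x + lincomb r x
  end.

Definition atoms (l : list term) : list (R -> R) := map snd l.

Definition over (P : (R -> R) -> Prop) (l : list term) : Prop :=
  forall a, In a (atoms l) -> P a.

Definition scale (al : R) (l : list term) : list term :=
  map (fun t => (al * fst t, snd t)) l.

Lemma lincomb_app (l1 l2 : list term) (x : R) :
  lincomb (l1 ++ l2) x = lincomb l1 x + lincomb l2 x.
Proof. induction l1 as [|t l1 IH]; simpl; [ring|]. rewrite IH. ring. Qed.

Lemma lincomb_scale (al : R) (l : list term) (x : R) :
  lincomb (scale al l) x = al * lincomb l x.
Proof. induction l as [|t l IH]; simpl; [ring|]. rewrite IH. simpl. ring. Qed.

Lemma atoms_scale (al : R) (l : list term) : atoms (scale al l) = atoms l.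
Proof. unfold atoms, scale. rewrite map_map. reflexivity. Qed.

Lemma over_app (P : (R -> R) -> Prop) (l1 l2 : list term) :
  over P l1 -> over P l2 -> over P (l1 ++ l2).
Proof.
  intros H1 H2 a Ha. unfold atoms in Ha. rewrite map_app in Ha.
  apply in_app_or in Ha as [Ha | Ha]; auto.
Qed.

Lemma over_scale (P : (R -> R) -> Prop) (al : R) (l : list term) :
  over P l -> over P (scale al l).
Proof. unfold over. rewrite atoms_scale. auto. Qed.

Lemma lincomb_absorb (c : R) (a : R -> R) (r : list term) (t : term) :
  In t r -> germ_eq a (snd t) ->
  exists r', atoms r' = atoms r /\ germ_eq (lincomb ((c, a) :: r)) (lincomb r').
Proof.
  intros Ht Hat. destruct (in_split t r Ht) as [r1 [r2 ->]].
  exists (r1 ++ (c + fst t, snd t) :: r2). split.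
  - unfold atoms. rewrite !map_app. reflexivity.
  - apply (ev_mono _ _ Hat). intros x Hx. simpl. rewrite !lincomb_app. simpl.
    rewrite Hx. ring.
Qed.

Definition has_dominant (s : R -> R) (S : list (R -> R)) : Prop :=
  germ_eq s (fun _ => 0)
  \/ exists c a, In a S /\ c <> 0 /\ is_lim (fun x => s x / a x) p_infty c.

Lemma has_dominant_germ (s s' : R -> R) (S S' : list (R -> R)) :
  has_dominant s S -> germ_eq s s' -> incl S S' -> has_dominant s' S'.
Proof.
  intros [H | [c [a [Ha [Hc Hl]]]]] G HS.
  - left. exact (germ_trans _ _ _ (germ_sym _ _ G) H).
  - right. exists c, a. repeat split; auto.
    apply is_lim_ext_loc with (fun x => s x / a x); [|exact Hl].
    apply (ev_mono _ _ G). intros x ->. reflexivity.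
Qed.

Lemma tends_of_ratio (s a : R -> R) (c : R) :
  0 < c -> is_lim (fun x => s x / a x) p_infty c -> tends_to_pinfty a ->
  tends_to_pinfty s.
Proof.
  intros Hc Hl Ha. assert (Hpos := tends_pos _ Ha). apply tends_is_lim in Ha.
  apply tends_is_lim, is_lim_ext_loc with (fun x => a x * (s x / a x)).
  - apply (ev_mono _ _ Hpos). intros x Hx. field. lra.
  - replace p_infty with (Rbar_mult p_infty c) at 2
      by (apply is_Rbar_mult_unique, is_Rbar_mult_p_infty_pos; simpl; lra).
    apply is_lim_mult; [exact Ha | exact Hl | simpl; lra].
Qed.

Section Dominance.

Variable A : (R -> R) -> Prop.
Hypothesis A_tends : forall a, A a -> tends_to_pinfty a.
Hypothesis A_comparable : forall a b, A a -> A b -> comparable a b.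

Lemma has_dominant_cons (c d : R) (a b s : R -> R) (S : list (R -> R)) :
  A a -> A b -> In b S -> c <> 0 -> d <> 0 -> ~ germ_eq a b ->
  is_lim (fun x => s x / b x) p_infty d ->
  has_dominant (fun x => c * a x + s x) (a :: S).
Proof.
  intros Ha Hb HbS Hc Hd Hab Hl. right.
  assert (Hpos := ev_and _ _ (tends_pos _ (A_tends _ Ha)) (tends_pos _ (A_tends _ Hb))).
  destruct (A_comparable _ _ Ha Hb) as [G | [G | G]]; [contradiction | |].
  - exists c, a. split; [apply in_eq | split; [exact Hc |]].
    apply is_lim_ext_loc with (fun x => c + (s x / b x) / (a x / b x)).
    + apply (ev_mono _ _ Hpos). intros x [Pa Pb]. field. lra.
    + replace (Finite c) with (Finite (c + 0)) by (f_equal; ring).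
      apply is_lim_plus'; [apply is_lim_const | exact (is_lim_div_tends _ _ _ Hl G)].
  - exists d, b. split; [apply in_cons, HbS | split; [exact Hd |]].
    apply is_lim_ext_loc with (fun x => c / (b x / a x) + s x / b x).
    + apply (ev_mono _ _ Hpos). intros x [Pa Pb]. field. lra.
    + replace (Finite d) with (Finite (0 + d)) by (f_equal; ring).
      apply is_lim_plus'; [ | exact Hl].
      exact (is_lim_div_tends (fun _ => c) _ c (is_lim_const c p_infty) G).
Qed.

(* Every linear combination of germs of A has a dominant term.  Terms with
   equal germs are first merged, which shortens the list. *)
Lemma lincomb_has_dominant (l : list term) :
  over A l -> has_dominant (lincomb l) (atoms l).
Proof.
  remember (length l) as n. assert (Hn : (length l <= n)%nat) by lia. clear Heqn.
  revert l Hn. induction n as [|n IH]; intros [|[c a] r] Hn HA.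
  - left. apply germ_refl.
  - simpl in Hn. lia.
  - left. apply germ_refl.
  - simpl in Hn.
    assert (Ha : A a) by (apply HA; left; reflexivity).
    assert (Hr : over A r) by (intros b Hb; apply HA; right; exact Hb).
    destruct (classic (exists t, In t r /\ germ_eq a (snd t))) as [[t [Ht Hat]] | Hnew].
    + destruct (lincomb_absorb c a r t Ht Hat) as [r' [Hatoms G]].
      assert (Hr' : over A r') by (unfold over; rewrite Hatoms; exact Hr).
      assert (Hlen : length r' = length r).
      { pose proof (f_equal (@length _) Hatoms) as Hl. unfold atoms in Hl.
        rewrite !length_map in Hl. exact Hl. }
      apply (has_dominant_germ _ _ _ _ (IH r' ltac:(lia) Hr') (germ_sym _ _ G)).
      rewrite Hatoms. apply incl_tl, incl_refl.
      destruct (Req_dec c 0) as [-> | Hc].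
      * apply (has_dominant_germ _ _ _ _ (IH r ltac:(lia) Hr)).
        -- apply germ_ext. intros x. simpl. ring.
        -- apply incl_tl, incl_refl.
      * destruct (IH r ltac:(lia) Hr) as [H0 | [d [b [Hb [Hd Hl]]]]].
        -- right. exists c, a. split; [left; reflexivity | split; [exact Hc |]].
           apply is_lim_ext_loc with (fun _ => c); [|apply is_lim_const].
           apply (ev_mono _ _ (ev_and _ _ H0 (tends_pos _ (A_tends _ Ha)))).
           intros x [Hx Pa]. simpl. rewrite Hx. field. lra.
        -- apply (has_dominant_cons c d a b (lincomb r) (atoms r) Ha (Hr b Hb) Hb Hc Hd);
             [|exact Hl].
           intros Gab. apply in_map_iff in Hb as [t [<- Ht]].
           apply Hnew. exists t. auto.
Qed.

Lemma lincomb_trichotomous (l : list term) : over A l -> trichotomous (lincomb l).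
Proof.
  intros HA. destruct (lincomb_has_dominant l HA) as [H0 | [c [a [Ha [Hc Hl]]]]].
  - left. exact H0.
  - assert (Ta := A_tends _ (HA _ Ha)). right.
    destruct (Rlt_dec 0 c) as [Hc' | Hc'].
    + left. exact (tends_of_ratio _ _ c Hc' Hl Ta).
    + right. apply (tends_of_ratio _ a (- c)); [lra | | exact Ta].
      apply is_lim_ext with (fun x => - (lincomb l x / a x)).
      * intros x. unfold Rdiv. ring.
      * exact (is_lim_opp _ _ c Hl).
Qed.

End Dominance.
(** * Stratification of H by exponential depth *)

Inductive Hlevel : nat -> (R -> R) -> Prop :=
  | Hlevel_ln n k : Hlevel n (iter_ln k)
  | Hlevel_exp n f : Hlevel n f -> Hlevel (S n) (fun x => exp (f x))
  | Hlevel_pow n f al : Hlevel n f -> 0 < al -> Hlevel n (fun x => Rpower (f x) al)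
  | Hlevel_mul n f g : Hlevel n f -> Hlevel n g -> Hlevel n (fun x => f x * g x)
  | Hlevel_div n f g : Hlevel n f -> Hlevel n g -> tends_to_pinfty (fun x => f x / g x) ->
      Hlevel n (fun x => f x / g x)
  | Hlevel_germ n f g : Hlevel n f -> germ_eq f g -> Hlevel n g
  | Hlevel_lift n f : Hlevel n f -> Hlevel (S n) f.

Lemma Hlevel_tends (n : nat) (f : R -> R) : Hlevel n f -> tends_to_pinfty f.
Proof.
  induction 1.
  - apply tends_iter_ln.
  - apply (tends_comp exp f); [apply tends_exp | assumption].
  - apply tends_rpow; assumption.
  - apply tends_mul; assumption.
  - assumption.
  - eapply tends_germ; eassumption.
  - assumption.
Qed.

Lemma Hlevel_mono (n m : nat) (f : R -> R) : (n <= m)%nat -> Hlevel n f -> Hlevel m f.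
Proof. induction 1; auto using Hlevel_lift. Qed.

Lemma inH_Hlevel (f : R -> R) : inH f -> exists n, Hlevel n f.
Proof.
  induction 1 as [k | f _ [n Hf] | f al _ [n Hf] _ Hal
                 | f g _ [n1 Hf] _ [n2 Hg] _ | f g _ [n1 Hf] _ [n2 Hg] Hfg
                 | f g _ [n Hf] Hfg].
  - exists O. apply Hlevel_ln.
  - exists (S n). apply Hlevel_exp, Hf.
  - exists n. apply Hlevel_pow; assumption.
  - exists (Nat.max n1 n2).
    apply Hlevel_mul; [apply (Hlevel_mono n1) | apply (Hlevel_mono n2)]; auto; lia.
  - exists (Nat.max n1 n2).
    apply Hlevel_div; [apply (Hlevel_mono n1) | apply (Hlevel_mono n2) | ]; auto; lia.
  - exists n. eapply Hlevel_germ; eassumption.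
Qed.

Lemma inH_tends (f : R -> R) : inH f -> tends_to_pinfty f.
Proof. intros Hf. destruct (inH_Hlevel f Hf) as [n Hn]. exact (Hlevel_tends n f Hn). Qed.

(* The atoms of level n are the iterated logarithms (n = 0) and the
   elements of level n - 1 (n > 0); these are the germs whose linear
   combinations express logarithms of elements of level n. *)
Definition Atom (n : nat) (a : R -> R) : Prop :=
  match n with
  | O => exists k, a = iter_ln k
  | S m => Hlevel m a
  end.

Lemma Atom_tends (n : nat) (a : R -> R) : Atom n a -> tends_to_pinfty a.
Proof. destruct n as [|m]; simpl. - intros [k ->]. apply tends_iter_ln. - apply Hlevel_tends. Qed.

Lemma Atom_iter_ln (n k : nat) : Atom n (iter_ln k).
Proof. destruct n as [|m]; simpl. - exists k. reflexivity. - apply Hlevel_ln. Qed.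

Lemma Atom_lift (n : nat) (a : R -> R) : Atom n a -> Atom (S n) a.
Proof. destruct n as [|m]; simpl. - intros [k ->]. apply Hlevel_ln. - apply Hlevel_lift. Qed.

(* ln f is a linear combination of atoms of level n for every f of level n:
   ln turns exp, powers, products and quotients into atoms, scalings,
   sums and differences. *)
Lemma Hlevel_log_lincomb (n : nat) (f : R -> R) : Hlevel n f ->
  exists l, over (Atom n) l /\ germ_eq (fun x => ln (f x)) (lincomb l).
Proof.
  induction 1 as [n k | n f Hf _ | n f al Hf [l [Hl G]] Hal
                 | n f g Hf [l1 [Hl1 G1]] Hg [l2 [Hl2 G2]]
                 | n f g Hf [l1 [Hl1 G1]] Hg [l2 [Hl2 G2]] _
                 | n f g _ [l [Hl G]] Hfg | n f _ [l [Hl G]]].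
  - exists ((1, iter_ln (S k)) :: nil). split.
    + intros a [<- | []]. apply Atom_iter_ln.
    + apply germ_ext. intros x. simpl. ring.
  - exists ((1, f) :: nil). split.
    + intros a [<- | []]. exact Hf.
    + apply germ_ext. intros x. simpl. rewrite ln_exp. ring.
  - exists (scale al l). split.
    + apply over_scale, Hl.
    + apply (ev_mono _ _ G). intros x Hx. unfold Rpower.
      rewrite ln_exp, lincomb_scale, <- Hx. ring.
  - exists (l1 ++ l2). split.
    + apply over_app; assumption.
    + apply (ev_mono _ _ (ev_and _ _ (ev_and _ _ G1 G2)
        (ev_and _ _ (tends_pos _ (Hlevel_tends _ _ Hf)) (tends_pos _ (Hlevel_tends _ _ Hg))))).
      intros x [[E1 E2] [Pf Pg]]. rewrite lincomb_app, <- E1, <- E2. apply ln_mult; assumption.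
  - exists (l1 ++ scale (-1) l2). split.
    + apply over_app; [assumption | apply over_scale; assumption].
    + apply (ev_mono _ _ (ev_and _ _ (ev_and _ _ G1 G2)
        (ev_and _ _ (tends_pos _ (Hlevel_tends _ _ Hf)) (tends_pos _ (Hlevel_tends _ _ Hg))))).
      intros x [[E1 E2] [Pf Pg]]. rewrite lincomb_app, lincomb_scale, <- E1, <- E2, ln_div; auto.
      ring.
  - exists l. split; [exact Hl|].
    apply germ_trans with (fun x => ln (f x)); [|exact G].
    apply (ev_mono _ _ Hfg). intros x ->. reflexivity.
  - exists l. split; [|exact G].
    intros a Ha. apply Atom_lift, Hl, Ha.
Qed.

(* If the atoms of level n are pairwise comparable, so is level n: the
   difference of logarithms of two elements is a linear combination of
   atoms, hence trichotomous. *)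
Lemma Hlevel_comparable_of_atoms (n : nat) :
  (forall a b, Atom n a -> Atom n b -> comparable a b) ->
  forall f g, Hlevel n f -> Hlevel n g -> comparable f g.
Proof.
  intros Hatoms f g Hf Hg.
  destruct (Hlevel_log_lincomb _ _ Hf) as [l1 [Hl1 G1]].
  destruct (Hlevel_log_lincomb _ _ Hg) as [l2 [Hl2 G2]].
  apply comparable_of_log_gap.
  - exact (ev_and _ _ (tends_pos _ (Hlevel_tends _ _ Hf)) (tends_pos _ (Hlevel_tends _ _ Hg))).
  - apply trichotomous_germ with (lincomb (l1 ++ scale (-1) l2)).
    + apply (lincomb_trichotomous (Atom n) (Atom_tends n) Hatoms).
      apply over_app; [assumption | apply over_scale; assumption].
    + apply (ev_mono _ _ (ev_and _ _ G1 G2)). intros x [E1 E2].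
      rewrite lincomb_app, lincomb_scale, <- E1, <- E2. ring.
Qed.

Lemma Hlevel_comparable (n : nat) :
  forall f g, Hlevel n f -> Hlevel n g -> comparable f g.
Proof.
  induction n as [|n IH]; apply Hlevel_comparable_of_atoms; simpl.
  - intros a b [j ->] [k ->]. apply comparable_iter_ln.
  - exact IH.
Qed.

Lemma inH_comparable (f g : R -> R) : inH f -> inH g -> comparable f g.
Proof.
  intros Hf Hg. destruct (inH_Hlevel _ Hf) as [n1 H1]. destruct (inH_Hlevel _ Hg) as [n2 H2].
  apply (Hlevel_comparable (Nat.max n1 n2));
    [apply (Hlevel_mono n1) | apply (Hlevel_mono n2)]; auto; lia.
Qed.
(** * Closure properties of P *)

Lemma inP_germ (p q : R -> R) : inP p -> germ_eq p q -> inP q.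
Proof.
  intros [H | [H | [f [Hf H]]]] G.
  - left. exact (H_germ _ _ H G).
  - right; left. exact (germ_trans _ _ _ (germ_sym _ _ G) H).
  - right; right. exists f. split; [exact Hf|]. exact (germ_trans _ _ _ (germ_sym _ _ G) H).
Qed.

Lemma inP_inv (p : R -> R) : inP p -> inP (fun x => 1 / p x).
Proof.
  intros [H | [H | [f [Hf H]]]].
  - right; right. exists p. split; [exact H | apply germ_refl].
  - right; left. apply (ev_mono _ _ H). intros x ->. field.
  - left. apply H_germ with f; [exact Hf|].
    apply (ev_mono _ _ (ev_and _ _ H (tends_pos _ (inH_tends _ Hf)))). intros x [-> Pf].
    field. lra.
Qed.

(* H is closed under all products: rule (iii) for distinct factors, and
   f * f = f^2 by rule (ii) otherwise. *)
Lemma inH_mul (f g : R -> R) : inH f -> inH g -> inH (fun x => f x * g x).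
Proof.
  intros Hf Hg. destruct (classic (germ_eq f g)) as [G | G].
  - apply H_germ with (fun x => Rpower (f x) 2).
    + apply H_pow; [exact Hf | exact (tends_pos _ (inH_tends _ Hf)) | lra].
    + apply (ev_mono _ _ (ev_and _ _ G (tends_pos _ (inH_tends _ Hf)))). intros x [<- Pf].
      replace 2 with (INR 2) by (simpl; lra). rewrite Rpower_pow by exact Pf. simpl. ring.
  - apply H_mul; assumption.
Qed.

(* By comparability, a ratio of two germs of H is 1, a germ of H
   (rule (iv)) or the inverse of one. *)
Lemma inP_ratio (f g : R -> R) : inH f -> inH g -> inP (fun x => f x / g x).
Proof.
  intros Hf Hg.
  assert (Hpos := ev_and _ _ (tends_pos _ (inH_tends _ Hf)) (tends_pos _ (inH_tends _ Hg))).
  destruct (inH_comparable f g Hf Hg) as [G | [G | G]].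
  - right; left. apply (ev_mono _ _ (ev_and _ _ G Hpos)). intros x [-> [Pg _]]. field. lra.
  - left. apply H_div; assumption.
  - right; right. exists (fun x => g x / f x). split; [apply H_div; assumption|].
    apply (ev_mono _ _ Hpos). intros x [Pf Pg]. field. lra.
Qed.

Lemma inP_mul (p q : R -> R) : inP p -> inP q -> inP (fun x => p x * q x).
Proof.
  intros [Hp | [Hp | [f [Hf Hp]]]].
  - intros [Hq | [Hq | [g [Hg Hq]]]].
    + left. apply inH_mul; assumption.
    + apply inP_germ with p; [left; exact Hp|].
      apply (ev_mono _ _ Hq). intros x ->. ring.
    + apply inP_germ with (fun x => p x / g x); [apply inP_ratio; assumption|].
      apply (ev_mono _ _ Hq). intros x ->. unfold Rdiv. ring.
  - intros Hq. apply inP_germ with q; [exact Hq|].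
    apply (ev_mono _ _ Hp). intros x ->. ring.
  - intros [Hq | [Hq | [g [Hg Hq]]]].
    + apply inP_germ with (fun x => q x / f x); [apply inP_ratio; assumption|].
      apply (ev_mono _ _ Hp). intros x ->. unfold Rdiv. ring.
    + apply inP_germ with p; [right; right; exists f; split; assumption|].
      apply (ev_mono _ _ Hq). intros x ->. ring.
    + apply inP_germ with (fun x => 1 / (f x * g x)); [apply inP_inv; left; apply inH_mul; assumption|].
      apply (ev_mono _ _ (ev_and _ _ (ev_and _ _ Hp Hq)
        (ev_and _ _ (tends_pos _ (inH_tends _ Hf)) (tends_pos _ (inH_tends _ Hg))))).
      intros x [[-> ->] [Pf Pg]]. field. lra.
Qed.

Theorem mainTheorem4 : forall p q : R -> R, inP p -> inP q ->
  inP (fun x => p x * q x) /\ inP (fun x => p x / q x).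
Proof.
  intros p q Hp Hq. split.
  - exact (inP_mul p q Hp Hq).
  - apply inP_germ with (fun x => p x * (1 / q x)).
    + exact (inP_mul _ _ Hp (inP_inv q Hq)).
    + apply germ_ext. intros x. unfold Rdiv. ring.
Qed.
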